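(* Let $\mathcal G=(V_{\mathrm{Max}},V_{\mathrm{Min}},T,E,w)$ be any shortest-path game. Then for every vertex $v\in V$, the deterministic value equals the memoryless upper value: $\mathrm{Val}^{\mathrm{d}}(v)=\overline{\mathrm{Val}}^{\mathrm{m}}(v)$ (as elements of $\mathbb Z\cup\{-\infty,+\infty\}$).
   Context: A shortest-path game (SPG) is a tuple $\mathcal G=(V_{\mathrm{Max}},V_{\mathrm{Min}},T,E,w)$ where $V=V_{\mathrm{Max}}\uplus V_{\mathrm{Min}}\uplus T$ is a finite set of vertices (owned by player Max, player Min, and target vertices respectively), $E\subseteq (V\setminus T)\times V$ is a set of directed edges such that every $v\in V\setminus T$ has at least one successor, and $w\colon E\to\mathbb Z$ is a weight function. A play from $v_0$ is either a finite path $v_0v_1\cdots v_k$ with $v_k\in T$ and $v_i\notin T$ for $i<k$, or an infinite path never visiting $T$. Its total payoff is $\mathrm{TP}(\pi)=\sum_{i=0}^{k-1}w(v_i,v_{i+1})$ in the first case and $+\infty$ in the second. A strategy of Min maps every finite path ending in a vertex $v\in V_{\mathrm{Min}}$ to a probability distribution on $V$ supported in the successors of $v$; strategies of Max are defined symmetrically for $V_{\mathrm{Max}}$. A strategy is deterministic if it always returns a Dirac distribution, and memoryless if its output depends only on the last vertex. For deterministic strategies $\sigma$ of Min and $\tau$ of Max there is a unique play $\mathrm{out}(v,\sigma,\tau)$ from $v$ conforming to both; define $\mathrm{Val}^{\sigma}(v)=\sup_{\tau}\mathrm{TP}(\mathrm{out}(v,\sigma,\tau))$ and $\mathrm{Val}^{\mathrm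 d}(v)=\inf_{\sigma}\mathrm{Val}^{\sigma}(v)$ (sup/inf over deterministic strategies; this equals $\sup_\tau\inf_\sigma$). For a memoryless strategy $\rho$ of Min and a memoryless strategy $\tau$ of Max one obtains a Markov chain on $V$ (from $v\in V_{\mathrm{Min}}$ move according to $\rho(v)$, from $v\in V_{\mathrm{Max}}$ according to $\tau(v)$, targets absorbing); write $\mathbb P^{\rho,\tau}_v$ for the induced probability measure on plays from $v$ and $\mathbb E^{\rho,\tau}_v(\mathrm{TP})$ for the expected total payoff (which is $+\infty$ if the target is missed with positive probability). Define $\mathrm{Val}^{\mathrm m,\rho}(v)=\sup_{\tau}\mathbb E^{\rho,\tau}_v(\mathrm{TP})$ over memoryless strategies $\tau$ of Max, and the memoryless upper value $\overline{\mathrm{Val}}^{\mathrm m}(v)=\inf_{\rho}\mathrm{Val}^{\mathrm m,\rho}(v)$ over memoryless strategies $\rho$ of Min. *)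

From HB Require Import structures.
From mathcomp Require Import all_boot all_order all_algebra.
From mathcomp Require Import all_classical all_reals all_analysis.
Set Implicit Arguments. Unset Strict Implicit. Unset Printing Implicit Defensive.
Import Order.TTheory GRing.Theory Num.Theory.
Local Open Scope ring_scope.

(* A shortest-path game on a finite vertex type V.
   Weights are given as a function V -> V -> int; only its values on
   edges are ever used. *)
Record spg (V : finType) := SPG {
  VMax : {set V};
  VMin : {set V};
  Tg : {set V};
  edge : rel V;
  weight : V -> V -> int;
  spg_disj_MaxMin : [disjoint VMax & VMin];
  spg_disj_MaxT : [disjoint VMax & Tg];
  spg_disj_MinT : [disjoint VMin & Tg];
  spg_cover : VMax :|: VMin :|: Tg = [set: V];
  spg_edge_src : forall u u', edge u u' -> u \notin Tg;
  spg_succ : forall u, u \notin Tg -> exists u', edge u u' }.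

Local Open Scope classical_set_scope.

Section Deterministic.
Context (R : realType) {V : finType} (G : spg V).

(* A deterministic (history-dependent) strategy for the owner of the
   vertices in P: it maps a finite path x :: h (whose last vertex is
   last x h) to a vertex, which must be a successor when the last vertex
   is in P. *)
Definition det_strat (P : {set V}) (s : seq V -> V) : Prop :=
  forall x h, last x h \in P -> edge G (last x h) (s (x :: h)).

(* Prefix of length n+1 of the outcome from v of the deterministic
   strategies s (Min) and t (Max); once a target is reached the sequence
   stutters there (this is only used until the first target). *)
Fixpoint hist (s t : seq V -> V) (v : V) (n : nat) : seq V :=
  match n with
  | 0 => [:: v]
  | n.+1 =>
      let h := hist s t v n in
      let u := last v h in
      rcons h (if u \in Tg G then u
               else if u \in VMin G then s h else t h)
  end.

Definition out (s t : seq V -> V) (v : V) (n : nat) : V := last v (hist s t v n).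

Definition TP (p : nat -> V) : \bar R :=
  match pselect (exists k, p k \in Tg G) with
  | left H => ((\sum_(i < @ex_minn (fun k => p k \in Tg G) H)
                  weight G (p i) (p i.+1))%:~R)%:E
  | right _ => +oo%E
  end.

Definition Val_sigma (s : seq V -> V) (v : V) : \bar R :=
  ereal_sup [set TP (out s t v) | t in det_strat (VMax G)].

Definition Val_d (v : V) : \bar R :=
  ereal_inf [set Val_sigma s v | s in det_strat (VMin G)].

End Deterministic.

Section Memoryless.
Context (R : realType) {V : finType} (G : spg V).

Definition ml_strat (P : {set V}) (r : V -> V -> R) : Prop :=
  forall u, u \in P ->
    [/\ forall u', 0 <= r u u',
        \sum_u' r u u' = 1
      & forall u', r u u' != 0 -> edge G u u'].

Definition trans (rho tau : V -> V -> R) (u u' : V) : R :=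
  if u \in VMin G then rho u u'
  else if u \in VMax G then tau u u'
  else (u == u')%:R.

Definition pathv (v : V) (s : seq V) (i : nat) : V := nth v (v :: s) i.

Definition path_prob (rho tau : V -> V -> R) (v : V) (n : nat)
    (s : n.-tuple V) : R :=
  \prod_(i < n) trans rho tau (pathv v s i) (pathv v s i.+1).

Definition trunc_TP (v : V) (n : nat) (s : n.-tuple V) : R :=
  \sum_(i < n) (if pathv v s i \in Tg G then 0
                else (weight G (pathv v s i) (pathv v s i.+1))%:~R).

Definition reach_prob (rho tau : V -> V -> R) (v : V) (n : nat) : R :=
  \sum_(s : n.-tuple V | last v s \in Tg G) path_prob rho tau v s.

Definition exp_trunc (rho tau : V -> V -> R) (v : V) (n : nat) : R :=
  \sum_(s : n.-tuple V) path_prob rho tau v s * trunc_TP v s.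

Definition ETP (rho tau : V -> V -> R) (v : V) : \bar R :=
  if limn (fun n => (reach_prob rho tau v n)%:E) == 1%E
  then limn (fun n => (exp_trunc rho tau v n)%:E)
  else +oo%E.

Definition Val_m_rho (rho : V -> V -> R) (v : V) : \bar R :=
  ereal_sup [set ETP rho tau v | tau in ml_strat (VMax G)].

Definition Val_m_upper (v : V) : \bar R :=
  ereal_inf [set Val_m_rho rho v | rho in ml_strat (VMin G)].

End Memoryless.

(* Both values equal hval_inf, the limit of value iteration: hval j is the value
   of the game in which Min must reach the target within j steps (paying +oo
   otherwise), and it decreases with j.
   Deterministic strategies: playing optimally for horizon j, Min ensures at most
   hval j; moving to a successor that maximises w + hval_inf, Max ensures at least
   hval_inf, by telescoping along the play up to its first visit to the target.
   Memoryless strategies: against that same choice of Max, fine hval_inf is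
   subharmonic on the vertices reached with positive probability, so the expected
   payoff is at least hval_inf. Conversely, given J, Min plays the horizon-J optimal
   move and, with a small probability eps, a move that decreases the rank of the
   vertex in its attractor of the target. From every vertex where hval J is finite
   the target is then reached with probability at least eps ^ J within J steps,
   hence almost surely, and hval J + d * (horizon at which hval stabilises) is
   superharmonic: the optimal moves of Min and all moves of Max decrease it by at
   least d, since weights are integers, while attractor moves increase it by at
   most a bound B, which eps = d / (B + d) compensates. The expected payoff is
   thus at most hval J + d * J, for any small enough d > 0. *)

From HB Require Import structures.
From mathcomp Require Import all_boot all_order all_algebra.
From mathcomp Require Import all_classical all_reals all_analysis.
From mathcomp Require Import lra.
Set Implicit Arguments. Unset Strict Implicit. Unset Printing Implicit Defensive.
Import Order.TTheory GRing.Theory Num.Theory numFieldNormedType.Exports.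
Local Open Scope ring_scope.
Local Open Scope classical_set_scope.

Lemma finite_eventually (V : finType) (P : V -> nat -> Prop) :
  (forall x i j, (i <= j)%N -> P x i -> P x j) -> (forall x, exists i, P x i) ->
  exists J, forall x, P x J.
Proof.
move=> Pmono Pev; suff [J PJ] : exists J, forall x, x \in enum V -> P x J.
  by exists J => x; apply: PJ; rewrite mem_enum.
elim: (enum V) => [|x s [J PJ]]; first by exists 0%N.
have [i Pxi] := Pev x; exists (maxn i J) => y; rewrite inE => /orP[/eqP ->|ys].
  exact: Pmono (leq_maxl i J) Pxi.
exact: Pmono (leq_maxr i J) (PJ y ys).
Qed.

Lemma finite_pos_lbound (R : realDomainType) (V : finType) (S : V -> Prop) (h : V -> R) :
  (forall u, S u -> 0 < h u) -> exists2 k, 0 < k & forall u, S u -> k <= h u.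
Proof.
move=> h_gt0; suff [k k_gt0 hk] : exists2 k, 0 < k & forall u, u \in enum V -> S u -> k <= h u.
  by exists k => // u; apply: hk; rewrite mem_enum.
elim: (enum V) => [|x s [k k_gt0 hk]]; first by exists 1.
have [Sx|nSx] := pselect (S x); last first.
  by exists k => // u; rewrite inE => /orP[/eqP -> //|]; apply: hk.
exists (Num.min k (h x)); first by rewrite lt_min k_gt0 h_gt0.
move=> u; rewrite inE ge_min => /orP[/eqP -> _|us Su]; first by rewrite lexx orbT.
by rewrite hk.
Qed.

Lemma sum_delta (R : pzSemiRingType) (V : finType) (y : V) (F : V -> R) :
  \sum_x (x == y)%:R * F x = F y.
Proof. by rewrite (bigD1 y) //= eqxx mul1r big1 ?addr0 // => x /negPf ->; rewrite mul0r. Qed.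

Lemma sum_delta1 (R : pzSemiRingType) (V : finType) (y : V) : \sum_x ((x == y)%:R : R) = 1.
Proof. by rewrite (bigD1 y) //= eqxx big1 ?addr0 // => x /negPf ->. Qed.

Lemma geometric_sum_le (R : realFieldType) (k : R) j : 0 < k -> k <= 1 ->
  \sum_(l < j) (1 - k) ^+ l <= k^-1.
Proof.
move=> k_gt0 k_le1; rewrite -(ler_pM2l k_gt0) mulfV ?gt_eqF //.
have := subrX1 (1 - k) j; rewrite addrAC subrr add0r mulNr => /eqP.
by rewrite eq_sym eqr_oppLR => /eqP ->; rewrite opprB gerBl exprn_ge0 // subr_ge0.
Qed.

Lemma ler_sum_term (R : numDomainType) (V : finType) (F : V -> R) y :
  (forall x, 0 <= F x) -> F y <= \sum_x F x.
Proof. by move=> F_ge0; rewrite (bigD1 y) //= lerDl sumr_ge0. Qed.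

(** * Finite Markov chains *)

Section MarkovChain.
Variables (R : realType) (V : finType) (P : V -> V -> R).
Hypotheses (P_ge0 : forall u x, 0 <= P u x) (P_sum1 : forall u, \sum_x P u x = 1).
Implicit Types (f g : V -> R) (u x : V).

Fixpoint expect (n : nat) f u : R :=
  if n is n.+1 then \sum_x P u x * expect n f x else f u.

Lemma expectS n f u : expect n.+1 f u = \sum_x P u x * expect n f x.
Proof. by []. Qed.

Definition chain_closed (S : V -> Prop) := forall u x, S u -> P u x != 0 -> S x.

Lemma expect_le_on (S : V -> Prop) f g n u : chain_closed S ->
  (forall x, S x -> f x <= g x) -> S u -> expect n f u <= expect n g u.
Proof.
move=> S_closed fg; elim: n u => [|n IHn] u Su /=; first exact: fg.
apply: ler_sum => x _; have [->|Pux] := eqVneq (P u x) 0; first by rewrite !mul0r.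
by rewrite ler_wpM2l // IHn //; exact: S_closed Su Pux.
Qed.

Lemma expect_le f g n u : (forall x, f x <= g x) -> expect n f u <= expect n g u.
Proof. by move=> fg; apply: (@expect_le_on (fun=> True)). Qed.

Lemma expect_cst c n u : expect n (fun=> c) u = c.
Proof.
elim: n u => //= n IHn u.
by under eq_bigr do rewrite IHn; rewrite -mulr_suml P_sum1 mul1r.
Qed.

Lemma expect_ge0 f n u : (forall x, 0 <= f x) -> 0 <= expect n f u.
Proof. by move=> f_ge0; rewrite -(expect_cst 0 n u); apply: expect_le. Qed.

Lemma expectD f g n u : expect n (f \+ g) u = expect n f u + expect n g u.
Proof.
elim: n u => //= n IHn u.
by rewrite -big_split; apply: eq_bigr => x _; rewrite IHn mulrDr.
Qed.

Lemma expectZ a f n u : expect n (fun x => a * f x) u = a * expect n f u.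
Proof.
elim: n u => //= n IHn u.
by rewrite mulr_sumr; apply: eq_bigr => x _; rewrite IHn mulrCA.
Qed.

Lemma expectN f n u : expect n (fun x => - f x) u = - expect n f u.
Proof.
rewrite -mulN1r -expectZ.
by congr expect; apply: funext => x; rewrite mulN1r.
Qed.

Lemma expectDn m n f u : expect (m + n) f u = expect m (expect n f) u.
Proof. by elim: m u => //= m IHm u; apply: eq_bigr => x _; rewrite IHm. Qed.

Lemma expectSr n f u : expect n.+1 f u = expect n (fun x => \sum_y P x y * f y) u.
Proof. by rewrite -addn1 expectDn. Qed.

Lemma sum_expectS g n u :
  \sum_(0 <= i < n.+1) expect i g u = g u + \sum_x P u x * \sum_(0 <= i < n) expect i g x.
Proof.
rewrite big_nat_recl //; congr (_ + _).
by under [RHS]eq_bigr do rewrite mulr_sumr; rewrite exchange_big.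
Qed.

Lemma expect_potential_le (S : V -> Prop) f g u : chain_closed S ->
  (forall x, S x -> g x + \sum_y P x y * f y <= f x) -> S u ->
  forall n, \sum_(0 <= i < n) expect i g u + expect n f u <= f u.
Proof.
move=> S_closed f_super Su n; elim: n u Su => [|n IHn] u Su; first by rewrite big_geq // add0r.
rewrite sum_expectS expectS -addrA -big_split /= (le_trans _ (f_super u Su)) // lerD2l.
apply: ler_sum => x _; rewrite -mulrDr.
have [->|Pux] := eqVneq (P u x) 0; first by rewrite !mul0r.
by rewrite ler_wpM2l // IHn //; exact: S_closed Su Pux.
Qed.

Lemma expect_potential_ge (S : V -> Prop) f g u : chain_closed S ->
  (forall x, S x -> f x <= g x + \sum_y P x y * f y) -> S u ->
  forall n, f u <= \sum_(0 <= i < n) expect i g u + expect n f u.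
Proof.
move=> S_closed f_sub Su n; rewrite -lerN2 opprD -sumrN.
under eq_bigr do rewrite -expectN.
rewrite -expectN; apply: (@expect_potential_le S (fun x => - f x)) => // x Sx.
by under eq_bigr do rewrite mulrN; rewrite sumrN -opprD lerN2 f_sub.
Qed.

Section Reachable.
Variable v : V.

Definition reachable u := exists n, 0 < expect n (fun x => (x == u)%:R) v.

Lemma reachable_refl : reachable v.
Proof. by exists 0%N; rewrite /= eqxx ltr01. Qed.

Lemma reachable_closed : chain_closed reachable.
Proof.
move=> u x [n reach_u] Pux; exists n.+1; rewrite expectSr.
have Pux_gt0 : 0 < P u x by rewrite lt0r Pux P_ge0.
apply: (lt_le_trans (_ : 0 < P u x * expect n (fun y => (y == u)%:R) v)).
  by rewrite mulr_gt0.
rewrite -expectZ; apply: expect_le => y.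
under eq_bigr do rewrite mulrC; rewrite sum_delta.
by have [->|_] := eqVneq y u; rewrite ?mulr1 ?mulr0.
Qed.

End Reachable.

Section Absorption.
Variable T : {set V}.
Hypothesis P_absorb : forall u x, u \in T -> P u x = (u == x)%:R.

Lemma expect_absorb f n u : u \in T -> expect n f u = f u.
Proof.
move=> uT; elim: n => //= n IHn.
by under eq_bigr do rewrite P_absorb // eq_sym; rewrite sum_delta.
Qed.

Definition hit n u := expect n (fun x => (x \in T)%:R) u.
Definition miss n u := expect n (fun x => (x \notin T)%:R) u.

Lemma hitDmiss n u : hit n u + miss n u = 1.
Proof.
rewrite /hit /miss -expectD -[RHS](expect_cst 1 n u).
by congr (expect _ _ u); apply: funext => x /=; case: (x \in T); rewrite ?addr0 ?add0r.
Qed.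

Lemma missE n u : miss n u = 1 - hit n u.
Proof. by rewrite -(hitDmiss n u) [hit n u + _]addrC addrK. Qed.

Lemma hit_ge0 n u : 0 <= hit n u.
Proof. by apply: expect_ge0 => x; rewrite ler0n. Qed.

Lemma miss_ge0 n u : 0 <= miss n u.
Proof. by apply: expect_ge0 => x; rewrite ler0n. Qed.

Lemma hit_le1 n u : hit n u <= 1.
Proof. by rewrite -(hitDmiss n u) lerDl miss_ge0. Qed.

Lemma hit_le m n u : (m <= n)%N -> hit m u <= hit n u.
Proof.
move/subnK <-; elim: (n - m)%N => // k IHk; apply: le_trans IHk _.
rewrite addSn /hit expectSr; apply: expect_le => x.
have [xT|_] := boolP (x \in T); last by rewrite sumr_ge0 // => y _; rewrite mulr_ge0.
by under eq_bigr do rewrite P_absorb // eq_sym; rewrite sum_delta xT.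
Qed.

Lemma miss_le m n u : (m <= n)%N -> miss n u <= miss m u.
Proof. by move=> mn; rewrite !missE lerB // hit_le. Qed.

Lemma hit_closed_out (S : V -> Prop) n u : chain_closed S ->
  (forall x, S x -> x \notin T) -> S u -> hit n u = 0.
Proof.
move=> S_closed S_out Su; apply/eqP; rewrite eq_le hit_ge0 andbT.
rewrite /hit -[leRHS](expect_cst 0 n u); apply: (expect_le_on _ S_closed) => // x Sx.
by rewrite (negbTE (S_out x Sx)).
Qed.

Section HittingSet.
Variable S : V -> Prop.
Hypotheses (S_closed : chain_closed S) (S_hit : forall u, S u -> exists n, 0 < hit n u).

Lemma miss_geometric : exists K k, [/\ (0 < K)%N, 0 < k &
  forall j u, S u -> miss (j * K) u <= (1 - k) ^+ j].
Proof.
have [K hitK] : exists K, forall u, S u -> 0 < hit K.+1 u.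
  apply: (finite_eventually (P := fun u n => S u -> 0 < hit n.+1 u)).
    by move=> u m n mn hm Su; apply: lt_le_trans (hm Su) (hit_le _ _).
  move=> u; have [Su|nSu] := pselect (S u); last by exists 0%N.
  have [n hn] := S_hit Su; exists n => _; exact: lt_le_trans hn (hit_le _ _).
have [k k_gt0 k_hit] := finite_pos_lbound hitK.
exists K.+1, k; split => // j u Su; have k_le1 := le_trans (k_hit u Su) (hit_le1 _ _).
have missK x : S x -> miss K.+1 x <= (1 - k) * (x \notin T)%:R.
  move=> Sx; have [xT|xT] := boolP (x \in T); first by rewrite /miss expect_absorb // xT mulr0.
  by rewrite mulr1 missE lerB // k_hit.
elim: j => [|j IHj]; first by rewrite mul0n /miss /= expr0 lern1 leq_b1.
rewrite mulSnr /miss expectDn exprS (le_trans _ (ler_wpM2l _ IHj)) ?subr_ge0 //.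
by rewrite -expectZ; apply: (expect_le_on _ S_closed).
Qed.

Lemma miss_series_bounded u : S u ->
  exists B, forall n, \sum_(0 <= i < n) miss i u <= B.
Proof.
move=> Su; have [K [k [K_gt0 k_gt0 missK]]] := miss_geometric.
have k_le1 : k <= 1.
  by rewrite -subr_ge0 -(expr1 (1 - k)) (le_trans (miss_ge0 (1 * K) u)) ?missK.
exists (K%:R / k) => n.
have blocks j : \sum_(0 <= i < j * K) miss i u <= K%:R * \sum_(l < j) (1 - k) ^+ l.
  elim: j => [|j IHj]; first by rewrite mul0n big_geq // big_ord0 mulr0.
  rewrite mulSnr (@big_cat_nat _ _ _ (j * K)) ?leq_addr //= big_ord_recr mulrDr lerD //.
  apply: (@le_trans _ _ (\sum_(j * K <= i < j * K + K) miss (j * K) u)).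
    by apply: ler_sum_nat => i /andP[ji _]; apply: miss_le.
  by rewrite sumr_const_nat addKn mulr_natl ler_wMn2r // missK.
apply: le_trans (_ : \sum_(0 <= i < n * K) miss i u <= _).
  rewrite [leRHS](@big_cat_nat _ _ _ n) ?leq_pmulr //=.
  by rewrite lerDl sumr_ge0 // => i _; apply: miss_ge0.
by apply: le_trans (blocks n) _; rewrite ler_pM2l ?ltr0n ?geometric_sum_le.
Qed.

Lemma miss_summable u : S u -> cvgn (series (miss ^~ u)).
Proof.
move=> Su; have [B missB] := miss_series_bounded Su.
apply: nondecreasing_is_cvgn; first by apply: nondecreasing_series => n _ _; apply: miss_ge0.
by exists B => _ [n _ <-]; apply: missB.
Qed.

Lemma miss_cvg0 u : S u -> miss ^~ u @ \oo --> 0.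
Proof. by move/miss_summable; apply: cvg_series_cvg_0. Qed.

Lemma expect_vanish_bound f n u : (forall x, S x -> x \in T -> f x = 0) -> S u ->
  `|expect n f u| <= (\sum_x `|f x|) * miss n u.
Proof.
move=> f_T Su; set C := \sum_x `|f x|.
have fC x : S x -> `|f x| <= C * (x \notin T)%:R.
  move=> Sx; have [xT|xT] := boolP (x \in T); first by rewrite f_T // normr0 mulr0.
  by rewrite mulr1; apply: (ler_sum_term (F := fun y => `|f y|)).
rewrite ler_norml /miss -expectZ -expectN.
by apply/andP; split; apply: (expect_le_on _ S_closed) => // x /fC; rewrite ler_norml => /andP[].
Qed.

Lemma series_expect_cvg g u : (forall x, S x -> x \in T -> g x = 0) -> S u ->
  cvgn (series (fun n => expect n g u)).
Proof.
move=> g_T Su; apply: normed_cvg.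
apply: (@series_le_cvg _ _ (fun n => (\sum_x `|g x|) * miss n u)).
- by move=> n; exact: normr_ge0.
- by move=> n; rewrite mulr_ge0 ?sumr_ge0 ?miss_ge0.
- by move=> n; exact: expect_vanish_bound.
- exact: is_cvg_seriesZ (miss_summable Su).
Qed.

Lemma expect_cvg0 f u : (forall x, S x -> x \in T -> f x = 0) -> S u ->
  (fun n => expect n f u) @ \oo --> 0.
Proof.
move=> f_T Su; set C := \sum_x `|f x|.
have missC0 : (fun n => C * miss n u) @ \oo --> 0.
  by rewrite -(mulr0 C); apply: cvgMl_tmp; exact: miss_cvg0.
apply: (@squeeze_cvgr _ _ _ _ (fun n => - (C * miss n u)) (fun n => C * miss n u)) => //.
- by apply: nearW => n; rewrite -ler_norml; exact: expect_vanish_bound.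
- by rewrite -oppr0; exact: cvgN.
Qed.

Lemma series_add_expect_cvg f g u :
  (forall x, S x -> x \in T -> f x = 0) -> (forall x, S x -> x \in T -> g x = 0) -> S u ->
  (fun n => series (fun i => expect i g u) n + expect n f u) @ \oo -->
    limn (series (fun n => expect n g u)).
Proof.
move=> f_T g_T Su; rewrite -[X in _ --> X]addr0.
exact: cvgD (series_expect_cvg g_T Su) (expect_cvg0 f_T Su).
Qed.

Lemma lim_series_le_potential f g u :
  (forall x, S x -> x \in T -> f x = 0) -> (forall x, S x -> x \in T -> g x = 0) ->
  (forall x, S x -> g x + \sum_y P x y * f y <= f x) -> S u ->
  limn (series (fun n => expect n g u)) <= f u.
Proof.
move=> f_T g_T f_super Su; have cvg_sum := series_add_expect_cvg f_T g_T Su.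
rewrite -(cvg_lim _ cvg_sum) //; apply: limr_le; first exact: cvgP cvg_sum.
by apply: nearW => n; exact: expect_potential_le S_closed f_super Su n.
Qed.

Lemma lim_series_ge_potential f g u :
  (forall x, S x -> x \in T -> f x = 0) -> (forall x, S x -> x \in T -> g x = 0) ->
  (forall x, S x -> f x <= g x + \sum_y P x y * f y) -> S u ->
  f u <= limn (series (fun n => expect n g u)).
Proof.
move=> f_T g_T f_sub Su; have cvg_sum := series_add_expect_cvg f_T g_T Su.
rewrite -(cvg_lim _ cvg_sum) //; apply: limr_ge; first exact: cvgP cvg_sum.
by apply: nearW => n; exact: expect_potential_ge S_closed f_sub Su n.
Qed.

End HittingSet.

Lemma reachable_hit v u : miss ^~ v @ \oo --> 0 -> reachable v u ->
  exists n, 0 < hit n u.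
Proof.
move=> miss0 [n reach_u]; have [//|no_hit] := pselect (exists n, 0 < hit n u).
have miss_u m : miss m u = 1.
  rewrite missE (_ : hit m u = 0) ?subr0 //; apply/eqP; rewrite eq_le hit_ge0 andbT.
  by rewrite leNgt; apply/negP => hit_u; apply: no_hit; exists m.
move: miss0; rewrite -(cvg_shiftn n) => miss0.
suff : expect n (fun x => (x == u)%:R) v <= 0 by rewrite leNgt reach_u.
rewrite -(cvg_lim _ miss0) //; apply: limr_ge; first exact: cvgP miss0.
apply: nearW => m /=; rewrite addnC /miss expectDn; apply: expect_le => x.
by have [->|_] := eqVneq x u; [rewrite -/(miss m u) miss_u | exact: miss_ge0].
Qed.

End Absorption.
End MarkovChain.

Section Vertices.
Variables (V : finType) (G : spg V).

Variant vertex_spec (u : V) : bool -> bool -> bool -> Prop :=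
| VertexTg of u \in Tg G : vertex_spec u true false false
| VertexMin of u \in VMin G : vertex_spec u false true false
| VertexMax of u \in VMax G : vertex_spec u false false true.

Lemma vertexP u : vertex_spec u (u \in Tg G) (u \in VMin G) (u \in VMax G).
Proof.
have : u \in VMax G :|: VMin G :|: Tg G by rewrite (spg_cover G) inE.
rewrite !inE => /orP[/orP[uMax|uMin]|uT].
- rewrite uMax (disjointFr (spg_disj_MaxT G) uMax).
  by rewrite (disjointFr (spg_disj_MaxMin G) uMax); constructor.
- rewrite uMin (disjointFr (spg_disj_MinT G) uMin).
  by rewrite (disjointFl (spg_disj_MaxMin G) uMin); constructor.
- rewrite uT (disjointFl (spg_disj_MinT G) uT).
  by rewrite (disjointFl (spg_disj_MaxT G) uT); constructor.
Qed.

Lemma VMin_Tg u : u \in VMin G -> u \notin Tg G.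
Proof. by case: vertexP. Qed.

Lemma VMax_Tg u : u \in VMax G -> u \notin Tg G.
Proof. by case: vertexP. Qed.

Lemma VMax_VMin u : u \in VMax G -> u \notin VMin G.
Proof. by case: vertexP. Qed.

Definition some_succ (u : V) : V := odflt u [pick x | edge G u x].

Lemma some_succP u : u \notin Tg G -> edge G u (some_succ u).
Proof.
move=> uT; rewrite /some_succ; case: pickP => //= no_succ.
by have [x ux] := spg_succ uT; move: (no_succ x); rewrite ux.
Qed.

End Vertices.

Lemma sum_tupleS (R : nmodType) (V : finType) n (F : n.+1.-tuple V -> R) :
  \sum_(s : n.+1.-tuple V) F s = \sum_x \sum_(s : n.-tuple V) F [tuple of x :: s].
Proof.
rewrite pair_big /= (reindex (fun p : V * n.-tuple V => [tuple of p.1 :: p.2])) //=.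
exists (fun s : n.+1.-tuple V => (thead s, [tuple of behead s])).
  by case=> x s _ /=; rewrite theadE; congr pair; apply: val_inj.
by move=> s _; rewrite [in RHS](tuple_eta s).
Qed.

Lemma sum_tuple0 (R : nmodType) (V : finType) (F : 0.-tuple V -> R) :
  \sum_(s : 0.-tuple V) F s = F [tuple].
Proof. by rewrite (big_pred1 [tuple]) // => s /=; apply/eqP; rewrite [s]tuple0. Qed.

Section Weights.
Variables (R : realType) (V : finType) (G : spg V).

Definition step_weight (u x : V) : R := if u \in Tg G then 0 else (weight G u x)%:~R.

Lemma pathv_cons u x n (s : n.-tuple V) i : (i <= n)%N ->
  pathv u [tuple of x :: s] i.+1 = pathv x s i.
Proof. by move=> le_in; rewrite /pathv /= (set_nth_default x) //= size_tuple ltnS. Qed.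

Lemma trunc_TP_cons u x n (s : n.-tuple V) :
  trunc_TP R G u [tuple of x :: s] = step_weight u x + trunc_TP R G x s.
Proof.
rewrite /trunc_TP big_ord_recl; congr (_ + _).
by apply: eq_bigr => i _; rewrite /= !pathv_cons // ltnW.
Qed.

End Weights.

Section StrategyChain.
Variables (R : realType) (V : finType) (G : spg V) (rho tau : V -> V -> R).
Hypotheses (rho_strat : ml_strat G (VMin G) rho) (tau_strat : ml_strat G (VMax G) tau).
Local Notation P := (trans G rho tau).

Lemma trans_ge0 u x : 0 <= P u x.
Proof.
rewrite /trans; case: vertexP => [_|uMin|uMax] /=; first exact: ler0n.
  by case: (rho_strat uMin).
by case: (tau_strat uMax).
Qed.

Lemma trans_sum1 u : \sum_x P u x = 1.
Proof.
rewrite /trans; case: vertexP => [_|uMin|uMax] /=.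
- by under eq_bigr do rewrite eq_sym; exact: sum_delta1.
- by case: (rho_strat uMin).
- by case: (tau_strat uMax).
Qed.

Lemma trans_Tg u x : u \in Tg G -> P u x = (u == x)%:R.
Proof. by rewrite /trans; case: vertexP. Qed.

Lemma trans_edge u x : u \notin Tg G -> P u x != 0 -> edge G u x.
Proof.
rewrite /trans; case: vertexP => //= [uMin|uMax] _.
  by case: (rho_strat uMin) => _ _; apply.
by case: (tau_strat uMax) => _ _; apply.
Qed.

Lemma path_prob_cons u x n (s : n.-tuple V) :
  path_prob G rho tau u [tuple of x :: s] = P u x * path_prob G rho tau x s.
Proof.
rewrite /path_prob big_ord_recl; congr (_ * _).
by apply: eq_bigr => i _; rewrite /= !pathv_cons // ltnW.
Qed.

Lemma path_prob_expect f n u :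
  \sum_(s : n.-tuple V) path_prob G rho tau u s * f (last u s) = expect P n f u.
Proof.
elim: n u => [|n IHn] u; first by rewrite sum_tuple0 /path_prob big_ord0 mul1r.
rewrite sum_tupleS expectS; apply: eq_bigr => x _; rewrite -IHn mulr_sumr.
by apply: eq_bigr => s _; rewrite path_prob_cons mulrA.
Qed.

Lemma reach_probE n u : reach_prob G rho tau u n = hit P (Tg G) n u.
Proof.
rewrite /reach_prob /hit big_mkcond /= -path_prob_expect.
by apply: eq_bigr => s _; case: ifP; rewrite ?mulr1 ?mulr0.
Qed.

Definition mean_weight u := \sum_x P u x * step_weight R G u x.

Lemma mean_weight_Tg u : u \in Tg G -> mean_weight u = 0.
Proof. by move=> uT; rewrite /mean_weight big1 // => x _; rewrite /step_weight uT mulr0. Qed.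

Lemma mean_weightD f u :
  mean_weight u + \sum_x P u x * f x = \sum_x P u x * (step_weight R G u x + f x).
Proof. by rewrite -big_split; apply: eq_bigr => x _; rewrite mulrDr. Qed.

Lemma path_prob_sum1 n u : \sum_(s : n.-tuple V) path_prob G rho tau u s = 1.
Proof.
rewrite -[RHS](expect_cst trans_sum1 1 n u) -path_prob_expect.
by apply: eq_bigr => s _; rewrite mulr1.
Qed.

Lemma exp_truncE n u :
  exp_trunc G rho tau u n = \sum_(0 <= i < n) expect P i mean_weight u.
Proof.
elim: n u => [|n IHn] u.
  by rewrite /exp_trunc sum_tuple0 /trunc_TP !big_ord0 big_geq // mulr0.
rewrite sum_expectS mean_weightD /exp_trunc sum_tupleS; apply: eq_bigr => x _.
rewrite -IHn /exp_trunc.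
under eq_bigr do rewrite path_prob_cons trunc_TP_cons -mulrA mulrDr.
by rewrite -mulr_sumr big_split /= -mulr_suml path_prob_sum1 mul1r.
Qed.

Lemma reach_prob_cvg u : cvgn (fun n => reach_prob G rho tau u n).
Proof.
apply: nondecreasing_is_cvgn.
  by apply/nondecreasing_seqP => n; rewrite !reach_probE (hit_le trans_ge0 trans_Tg).
by exists 1 => _ [n _ <-]; rewrite reach_probE (hit_le1 trans_ge0 trans_sum1).
Qed.

Lemma reach_prob_miss n u : reach_prob G rho tau u n = 1 - miss P (Tg G) n u.
Proof. by rewrite reach_probE -(hitDmiss trans_sum1 (Tg G) n u) addrK. Qed.

Lemma ETP_miss_cvg0 u : limn (fun n => (reach_prob G rho tau u n)%:E) = 1%E ->
  miss P (Tg G) ^~ u @ \oo --> 0.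
Proof.
rewrite (EFin_lim (@reach_prob_cvg u)) => -[lim1].
have -> : miss P (Tg G) ^~ u = fun n => 1 - reach_prob G rho tau u n.
  by apply: funext => n; rewrite reach_prob_miss subKr.
by rewrite -(subrr 1); apply: cvgB; [exact: cvg_cst | rewrite -lim1; exact: reach_prob_cvg].
Qed.

Lemma ETP_series (S : V -> Prop) u : chain_closed P S -> S u ->
  (forall x, S x -> exists n, 0 < hit P (Tg G) n x) ->
  ETP G rho tau u = (limn (series (fun n => expect P n mean_weight u)))%:E.
Proof.
move=> S_closed Su S_hit.
have miss0 := miss_cvg0 trans_ge0 trans_sum1 trans_Tg S_closed S_hit Su.
have reach1 : (fun n => reach_prob G rho tau u n) @ \oo --> (1 : R).
  under eq_fun do rewrite reach_prob_miss.
  suff : (fun n => 1 - miss P (Tg G) n u) @ \oo --> (1 - 0 : R) by rewrite subr0.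
  by apply: cvgB; [exact: cvg_cst | exact: miss0].
rewrite /ETP (EFin_lim (@reach_prob_cvg u)) (cvg_lim _ reach1) // eqxx.
under eq_fun do rewrite exp_truncE.
apply: EFin_lim; apply: (series_expect_cvg trans_ge0 trans_sum1 trans_Tg S_closed S_hit) => //.
by move=> x _ xT; rewrite mean_weight_Tg.
Qed.

End StrategyChain.

(** * Value iteration *)

Section ValueIteration.
Variables (R : realType) (V : finType) (G : spg V).
Local Notation w u x := ((weight G u x)%:~R : R).
Implicit Types (Y : V -> \bar R) (u x : V).

Definition best_move Y u : V :=
  let F x := ((w u x)%:E + Y x)%E in
  if u \in VMin G then Order.arg_min (some_succ G u) (edge G u) F
  else Order.arg_max (some_succ G u) (edge G u) F.

Definition bellman Y u : \bar R :=
  if u \in Tg G then 0%E else ((w u (best_move Y u))%:E + Y (best_move Y u))%E.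

Definition hval (j : nat) : V -> \bar R :=
  iter j bellman (fun u => if u \in Tg G then 0 else +oo)%E.

Lemma best_move_edge Y u : u \notin Tg G -> edge G u (best_move Y u).
Proof.
move=> uT; rewrite /best_move; case: ifP => _.
  by case: arg_minP => //; exact: some_succP.
by case: arg_maxP => //; exact: some_succP.
Qed.

Lemma bellman_min Y u x : u \in VMin G -> edge G u x ->
  (bellman Y u <= (w u x)%:E + Y x)%E.
Proof.
move=> uMin ux; rewrite /bellman (negbTE (VMin_Tg uMin)) /best_move uMin.
by case: arg_minP => [|y _]; [exact: some_succP (VMin_Tg uMin) | apply].
Qed.

Lemma bellman_max Y u x : u \in VMax G -> edge G u x ->
  ((w u x)%:E + Y x <= bellman Y u)%E.
Proof.
move=> uMax ux; have uT := VMax_Tg uMax.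
rewrite /bellman (negbTE uT) /best_move (negbTE (VMax_VMin uMax)).
by case: arg_maxP => [|y _]; [exact: some_succP | apply].
Qed.

Lemma bellman_le Y Y' u : (forall x, (Y x <= Y' x)%E) -> (bellman Y u <= bellman Y' u)%E.
Proof.
move=> YY'; case: (vertexP G u) => [uT|uMin|uMax].
- by rewrite /bellman uT.
- apply: le_trans (bellman_min _ uMin (best_move_edge Y' (VMin_Tg uMin))) _.
  by rewrite /bellman (negbTE (VMin_Tg uMin)); apply: leeD2l.
- apply: le_trans (bellman_max _ uMax (best_move_edge Y (VMax_Tg uMax))).
  by rewrite /bellman (negbTE (VMax_Tg uMax)); apply: leeD2l.
Qed.

Lemma hvalS j : hval j.+1 = bellman (hval j).
Proof. by []. Qed.

Lemma hval_Tg j u : u \in Tg G -> hval j u = 0%E.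
Proof. by case: j => [|j] uT; rewrite /= ?/bellman uT. Qed.

Lemma hval_le i j u : (i <= j)%N -> (hval j u <= hval i u)%E.
Proof.
have hval_nonincr k x : (hval k.+1 x <= hval k x)%E.
  elim: k x => [|k IHk] x; last exact: bellman_le.
  by rewrite hvalS /bellman /=; case: ifP; rewrite ?leey.
move/subnK <-; elim: (j - i)%N => // k IHk.
exact: le_trans (hval_nonincr _ _) IHk.
Qed.

Lemma hval_int j u : hval j u = +oo%E \/ exists z : int, hval j u = (z%:~R)%:E.
Proof.
elim: j u => [|j IHj] u; first by rewrite /=; case: ifP; [right; exists 0 | left].
rewrite hvalS /bellman; case: ifP => _; first by right; exists 0.
case: (IHj (best_move (hval j) u)) => [->|[z ->]]; first by left.
by right; exists (weight G u (best_move (hval j) u) + z); rewrite -EFinD intrD.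
Qed.

Definition hval_inf u : \bar R := ereal_inf (range (hval ^~ u)).

Lemma hval_inf_le j u : (hval_inf u <= hval j u)%E.
Proof. by apply: ereal_inf_lbound; exists j. Qed.

Lemma hval_inf_Tg u : u \in Tg G -> hval_inf u = 0%E.
Proof.
move=> uT; apply/eqP; rewrite eq_le (le_trans (hval_inf_le 0 u)) ?hval_Tg //=.
by apply: le_ereal_inf_tmp => _ [j _ <-]; rewrite hval_Tg.
Qed.

Lemma hval_inf_min u x : u \in VMin G -> edge G u x ->
  (hval_inf u <= (w u x)%:E + hval_inf x)%E.
Proof.
move=> uMin ux; rewrite -leeBlDl //; apply: le_ereal_inf_tmp => _ [j _ <-].
by rewrite leeBlDl // (le_trans (hval_inf_le j.+1 u)) // bellman_min.
Qed.

Definition max_move u : V :=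
  Order.arg_max (some_succ G u) (edge G u) (fun x => ((w u x)%:E + hval_inf x)%E).

Lemma max_move_edge u : u \notin Tg G -> edge G u (max_move u).
Proof. by move=> uT; rewrite /max_move; case: arg_maxP => //; exact: some_succP. Qed.

Lemma hval_inf_max u : u \in VMax G ->
  (hval_inf u <= (w u (max_move u))%:E + hval_inf (max_move u))%E.
Proof.
move=> uMax; have uT := VMax_Tg uMax; rewrite leNgt; apply/negP => max_lt.
(* Otherwise a single horizon [J] works for the finitely many successors, and then
   [hval J.+1 u < hval_inf u]. *)
have [J ltJ] : exists J, forall x, edge G u x -> ((w u x)%:E + hval J x < hval_inf u)%E.
  apply: (finite_eventually (P := fun x j => edge G u x -> ((w u x)%:E + hval j x < hval_inf u)%E)).
    by move=> x i j ij lti ux; apply: le_lt_trans (lti ux); rewrite leeD2l // hval_le.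
  move=> x; have [ux|_] := boolP (edge G u x); last by exists 0%N.
  have : ((w u x)%:E + hval_inf x < hval_inf u)%E.
    apply: le_lt_trans max_lt; rewrite /max_move.
    by case: arg_maxP => [|y _]; [exact: some_succP | apply].
  by rewrite -lteBrDl // => /ereal_inf_lt [_ [j _ <-]]; exists j => _; rewrite -lteBrDl.
have := hval_inf_le J.+1 u; rewrite hvalS {1}/bellman (negbTE uT).
by rewrite leNgt ltJ // best_move_edge.
Qed.

End ValueIteration.

(** * Deterministic strategies *)

Section Plays.
Variables (R : realType) (V : finType) (G : spg V).
Local Notation w u x := ((weight G u x)%:~R : R).
Implicit Types (s t : seq V -> V) (p : nat -> V).

Lemma TP_infty p : (forall k, p k \notin Tg G) -> TP R G p = +oo%E.
Proof.
by move=> no_hit; rewrite /TP; case: pselect => // -[k pk]; move: (no_hit k); rewrite pk.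
Qed.

Lemma TP_first_hit p k : p k \in Tg G -> (forall i, (i < k)%N -> p i \notin Tg G) ->
  TP R G p = (\sum_(i < k) w (p i) (p i.+1))%:E.
Proof.
move=> pk before_k; rewrite /TP; case: pselect => [hit|]; last by case; exists k.
case: ex_minnP => m pm m_min; rewrite rmorph_sum; suff -> : m = k by [].
apply/eqP; rewrite eqn_leq m_min // leqNgt; apply/negP => /before_k.
by rewrite pm.
Qed.

Lemma TP_ge_potential p (Phi : V -> \bar R) :
  (forall u, u \in Tg G -> Phi u = 0%E) ->
  (forall i, p i \notin Tg G -> (Phi (p i) <= (w (p i) (p i.+1))%:E + Phi (p i.+1))%E) ->
  (Phi (p 0%N) <= TP R G p)%E.
Proof.
move=> Phi_Tg Phi_step.
have [hit|no_hit] := pselect (exists k, (fun k => p k \in Tg G) k); last first.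
  by rewrite TP_infty ?leey // => k; apply/negP => pk; apply: no_hit; exists k.
case: (ex_minnP hit) => k pk k_min.
have before_k i : (i < k)%N -> p i \notin Tg G.
  by move=> ik; apply/negP => /k_min; rewrite leqNgt ik.
rewrite (TP_first_hit pk before_k).
suff acc i : (i <= k)%N -> (Phi (p 0%N) <= (\sum_(l < i) w (p l) (p l.+1))%:E + Phi (p i))%E.
  by have := acc k (leqnn k); rewrite (Phi_Tg _ pk) adde0.
elim: i => [|i IHi] ik; first by rewrite big_ord0 add0e.
apply: le_trans (IHi (ltnW ik)) _; rewrite big_ord_recr /= EFinD -addeA.
by apply: leeD2l; exact: Phi_step (before_k i ik).
Qed.

Lemma TP_le_hval p J :
  (forall i, p i \in Tg G -> p i.+1 = p i) ->
  (forall i, (i < J)%N -> p i \notin Tg G ->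
     ((w (p i) (p i.+1))%:E + hval R G (J - i.+1) (p i.+1) <= hval R G (J - i) (p i))%E) ->
  (TP R G p <= hval R G J (p 0%N))%E.
Proof.
move=> stutter step.
have [->|[z hvalJ]] := hval_int R G J (p 0%N); first exact: leey.
pose ws l : R := if p l \in Tg G then 0 else w (p l) (p l.+1).
have acc i : (i <= J)%N ->
    ((\sum_(l < i) ws l)%:E + hval R G (J - i) (p i) <= hval R G J (p 0%N))%E.
  elim: i => [|i IHi] iJ; first by rewrite big_ord0 subn0 add0e.
  apply: le_trans (IHi (ltnW iJ)); rewrite big_ord_recr /= EFinD -addeA leeD2l //.
  rewrite /ws; case: ifPn => [pT|pT]; last exact: step.
  by rewrite stutter // !hval_Tg // add0e.
have pJ : p J \in Tg G.
  apply/negPn/negP => pJ; have := acc J (leqnn J); rewrite subnn /= (negbTE pJ).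
  by rewrite hvalJ addey.
have [k pk k_min] := ex_minnP (ex_intro (fun k => p k \in Tg G) J pJ).
have before_k i : (i < k)%N -> p i \notin Tg G.
  by move=> ik; apply/negP => /k_min; rewrite leqNgt ik.
have after_k l : (k <= l)%N -> p l = p k.
  by move/subnK <-; elim: (l - k)%N => // m IHm; rewrite addSn stutter IHm.
apply: le_trans (acc J (leqnn J)); rewrite subnn hval_Tg // adde0 (TP_first_hit pk before_k).
rewrite lee_fin -(big_mkord xpredT ws) (big_cat_nat (n := k)) ?k_min //= big_mkord.
rewrite [X in _ <= _ + X]big1_seq ?addr0 /=; last first.
  by move=> l; rewrite mem_index_iota => /andP[kl _]; rewrite /ws after_k // pk.
by apply: ler_sum => i _; rewrite /ws (negbTE (before_k _ (ltn_ord i))).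
Qed.

Lemma hist_cons s t v n : exists2 h, hist G s t v n = v :: h & size h = n.
Proof.
elim: n => [|n [h hn size_h]]; first by exists [::].
by rewrite /= hn /=; eexists; [by [] | rewrite size_rcons size_h].
Qed.

Lemma size_hist s t v n : size (hist G s t v n) = n.+1.
Proof. by have [h -> <-] := hist_cons s t v n. Qed.

Lemma out_Tg s t v n : out G s t v n \in Tg G -> out G s t v n.+1 = out G s t v n.
Proof. by rewrite {2}/out /= last_rcons => ->. Qed.

Lemma out_VMin s t v n : out G s t v n \in VMin G -> out G s t v n.+1 = s (hist G s t v n).
Proof. by move=> uMin; rewrite {1}/out /= last_rcons (negbTE (VMin_Tg uMin)) uMin. Qed.

Lemma out_VMax s t v n : out G s t v n \in VMax G -> out G s t v n.+1 = t (hist G s t v n).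
Proof.
move=> uMax; rewrite {1}/out /= last_rcons.
by rewrite (negbTE (VMax_Tg uMax)) (negbTE (VMax_VMin uMax)).
Qed.

Lemma out_edge s t v n : det_strat G (VMin G) s -> det_strat G (VMax G) t ->
  out G s t v n \notin Tg G -> edge G (out G s t v n) (out G s t v n.+1).
Proof.
move=> s_strat t_strat; have [h hn _] := hist_cons s t v n.
have out_last : out G s t v n = last v h by rewrite /out hn.
case: (vertexP G (out G s t v n)) => [//|uMin|uMax] _.
  by rewrite out_VMin // hn out_last; apply: s_strat; rewrite -out_last.
by rewrite out_VMax // hn out_last; apply: t_strat; rewrite -out_last.
Qed.

(* The history [h] ends with the current vertex, so [(size h).-1] steps have been played. *)
Definition horizon_strat J (v : V) (h : seq V) : V :=
  let i := (size h).-1 in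
  if (i < J)%N then best_move G (hval R G (J - i.+1)) (last v h) else some_succ G (last v h).

Lemma horizon_strat_det J v : det_strat G (VMin G) (horizon_strat J v).
Proof.
move=> x h xhMin; have xhT := VMin_Tg xhMin.
by rewrite /horizon_strat /=; case: ifP => _; [exact: best_move_edge | exact: some_succP].
Qed.

Lemma TP_horizon_strat J v t : det_strat G (VMax G) t ->
  (TP R G (out G (horizon_strat J v) t v) <= hval R G J v)%E.
Proof.
move=> t_strat; apply: TP_le_hval => [i|i iJ pT]; first exact: out_Tg.
rewrite -(subnSK iJ) hvalS.
case: (vertexP G (out G (horizon_strat J v) t v i)) pT => [//|uMin|uMax] _.
  by rewrite out_VMin // /horizon_strat size_hist /= iJ /bellman (negbTE (VMin_Tg uMin)).
apply: (bellman_max _ uMax); apply: (out_edge _ _ (VMax_Tg uMax)) => //.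
exact: horizon_strat_det.
Qed.

Definition max_strat (v : V) (h : seq V) : V := max_move R G (last v h).

Lemma max_strat_det v : det_strat G (VMax G) (max_strat v).
Proof. by move=> x h uMax; apply: max_move_edge; exact: VMax_Tg. Qed.

Lemma TP_max_strat s v : det_strat G (VMin G) s ->
  (hval_inf R G v <= TP R G (out G s (max_strat v) v))%E.
Proof.
move=> s_strat; apply: (TP_ge_potential (p := out G s (max_strat v) v)) => [u|i pT].
  exact: hval_inf_Tg.
case: (vertexP G (out G s (max_strat v) v i)) pT => [//|uMin|uMax] _.
  by apply: (hval_inf_min R uMin); apply: (out_edge _ _ (VMin_Tg uMin)) => //; exact: max_strat_det.
by rewrite out_VMax //; exact: hval_inf_max.
Qed.

Lemma Val_dE v : Val_d R G v = hval_inf R G v.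
Proof.
apply/eqP; rewrite eq_le; apply/andP; split.
  apply: le_ereal_inf_tmp => _ [J _ <-]; apply: ge_ereal_inf.
  exists (Val_sigma R G (horizon_strat J v) v).
    by exists (horizon_strat J v) => //; exact: horizon_strat_det.
  by apply: ge_ereal_sup => _ [t t_strat <-]; exact: TP_horizon_strat.
apply: le_ereal_inf_tmp => _ [s s_strat <-]; apply: le_ereal_sup_tmp.
exists (TP R G (out G s (max_strat v) v)); last exact: TP_max_strat.
by exists (max_strat v) => //; exact: max_strat_det.
Qed.

End Plays.

(** * Memoryless strategies *)

Section MaxResponse.
Variables (R : realType) (V : finType) (G : spg V).

Definition max_dirac (u x : V) : R := (x == max_move R G u)%:R.

Lemma max_dirac_strat : ml_strat G (VMax G) max_dirac.
Proof.
move=> u uMax; split; first by move=> x; rewrite ler0n.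
  exact: sum_delta1.
by move=> x; rewrite pnatr_eq0 eqb0 negbK => /eqP ->; exact: max_move_edge (VMax_Tg uMax).
Qed.

Variable rho : V -> V -> R.
Hypothesis rho_strat : ml_strat G (VMin G) rho.

Local Notation P := (trans G rho max_dirac).

Lemma hval_inf_trans u x : P u x != 0 ->
  (hval_inf R G u <= (step_weight R G u x)%:E + hval_inf R G x)%E.
Proof.
rewrite /trans /step_weight; case: (vertexP G u) => [uT|uMin|uMax] /=.
- by rewrite pnatr_eq0 eqb0 negbK => /eqP <-; rewrite add0e.
- by move=> rho_ux; apply: (hval_inf_min R uMin); case: (rho_strat uMin) => _ _; apply.
- by rewrite /max_dirac pnatr_eq0 eqb0 negbK => /eqP ->; exact: hval_inf_max.
Qed.

Lemma hit_hval_inf_infty n u : hval_inf R G u = +oo%E -> hit P (Tg G) n u = 0.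
Proof.
move=> u_infty; apply: (hit_closed_out (trans_ge0 rho_strat max_dirac_strat)
  (trans_sum1 rho_strat max_dirac_strat) (S := fun x => hval_inf R G x = +oo%E) n _ _ u_infty).
- move=> y x y_infty /hval_inf_trans; rewrite y_infty.
  by case: (hval_inf R G x) => //= r; rewrite leNgt ltey.
- by move=> x x_infty; apply/negP => xT; move: x_infty; rewrite hval_inf_Tg.
Qed.

Section AlmostSureTarget.
Variable v : V.
Hypothesis reach1 : limn (fun n => (reach_prob G rho max_dirac v n)%:E) = 1%E.

Lemma reachable_hit_max_dirac u : reachable P v u -> exists n, 0 < hit P (Tg G) n u.
Proof.
exact: (reachable_hit (trans_ge0 rho_strat max_dirac_strat)
  (trans_sum1 rho_strat max_dirac_strat) (ETP_miss_cvg0 rho_strat max_dirac_strat reach1)).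
Qed.

Lemma reachable_hval_inf_ninfty u : reachable P v u -> hval_inf R G u != +oo%E.
Proof.
move=> /reachable_hit_max_dirac[n]; apply: contraTneq => /(hit_hval_inf_infty n) ->.
by rewrite ltxx.
Qed.

Definition fin_reachable u := reachable P v u /\ hval_inf R G u \is a fin_num.

Lemma fin_reachable_closed : chain_closed P fin_reachable.
Proof.
move=> u x [reach_u u_fin] Pux.
have reach_x := reachable_closed (trans_ge0 rho_strat max_dirac_strat) reach_u Pux.
split; rewrite // fin_numE; apply/andP; split.
  apply: contraTneq u_fin => x_ninfty.
  by have := hval_inf_trans Pux; rewrite x_ninfty addeNy leeNy_eq fin_numE => /eqP ->.
exact: reachable_hval_inf_ninfty reach_x.
Qed.

Lemma fine_hval_inf_sub u : fin_reachable u ->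
  fine (hval_inf R G u) <=
  mean_weight G rho max_dirac u + \sum_x P u x * fine (hval_inf R G x).
Proof.
move=> Su; rewrite mean_weightD -[X in X <= _]mul1r.
rewrite -(trans_sum1 rho_strat max_dirac_strat u) mulr_suml; apply: ler_sum => x _.
have [->|Pux] := eqVneq (P u x) 0; first by rewrite !mul0r.
have [_ x_fin] := fin_reachable_closed Su Pux; have [_ u_fin] := Su.
rewrite ler_wpM2l ?(trans_ge0 rho_strat max_dirac_strat) // -lee_fin EFinD !fineK //.
exact: hval_inf_trans.
Qed.

End AlmostSureTarget.

Lemma ETP_max_dirac v : (hval_inf R G v <= ETP G rho max_dirac v)%E.
Proof.
have [reach1|reach_lt1] := eqVneq (limn (fun n => (reach_prob G rho max_dirac v n)%:E)) 1%E;
  last by rewrite /ETP (negbTE reach_lt1) leey.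
have [->|v_ninfty] := eqVneq (hval_inf R G v) -oo%E; first exact: leNye.
have S_hit u : fin_reachable v u -> exists n, 0 < hit P (Tg G) n u.
  by case=> reach_u _; exact: (reachable_hit_max_dirac reach1 reach_u).
have Sv : fin_reachable v v.
  split; first exact: reachable_refl.
  by rewrite fin_numE v_ninfty (reachable_hval_inf_ninfty reach1) //; exact: reachable_refl.
have S_closed := fin_reachable_closed reach1.
rewrite (ETP_series rho_strat max_dirac_strat S_closed Sv S_hit).
rewrite -[hval_inf R G v]fineK; last by case: Sv.
rewrite lee_fin; apply: (@lim_series_ge_potential _ _ _ (trans_ge0 rho_strat max_dirac_strat)
  (trans_sum1 rho_strat max_dirac_strat) _ (trans_Tg rho max_dirac) _ S_closed S_hit
  (fun u => fine (hval_inf R G u))) => //.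
- by move=> u _ uT; rewrite hval_inf_Tg.
- by move=> u _ uT; exact: mean_weight_Tg.
- exact: fine_hval_inf_sub reach1.
Qed.

End MaxResponse.

(* [N.+1] when no [i <= N] satisfies [P]. *)
Definition first_upto (N : nat) (P : pred nat) : nat := find P (iota 0 N.+1).

Lemma first_upto_le N (P : pred nat) i : P i -> (first_upto N P <= i)%N.
Proof.
move=> Pi; rewrite /first_upto; have [iN|Ni] := ltnP i N.+1; last first.
  by rewrite (leq_trans (find_size _ _)) // size_iota.
by rewrite leqNgt; apply/negP => /(before_find 0); rewrite nth_iota // add0n Pi.
Qed.

Lemma first_uptoP N (P : pred nat) : P N -> P (first_upto N P).
Proof.
move=> PN; have has_P : has P (iota 0 N.+1).
  by apply/hasP; exists N; rewrite // mem_iota add0n ltnSn.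
have lt_N : (first_upto N P < N.+1)%N by rewrite -[X in (_ < X)%N](size_iota 0) -has_find.
by have := nth_find 0 has_P; rewrite nth_iota.
Qed.

Section HorizonRanks.
Variables (R : realType) (V : finType) (G : spg V) (J : nat).
Local Notation w u x := ((weight G u x)%:~R : R).
Local Notation hval := (hval R G).
Implicit Types u x : V.

Definition winJ u : bool := hval J u != +oo%E.
Definition stab_rank u : nat := first_upto J (fun i => hval i u == hval J u).
Definition attr_rank u : nat := first_upto J (fun i => hval i u != +oo%E).
Definition opt_move u : V := best_move G (hval (stab_rank u).-1) u.
Definition attr_move u : V := best_move G (hval (attr_rank u).-1) u.

Lemma stab_rank_le u : (stab_rank u <= J)%N.
Proof. by rewrite /stab_rank first_upto_le. Qed.

Lemma hval_stab_rank u : hval (stab_rank u) u = hval J u.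
Proof. by apply/eqP; apply: (@first_uptoP J (fun i => hval i u == hval J u)). Qed.

Lemma stab_rank_Tg u : u \in Tg G -> stab_rank u = 0%N.
Proof. by move=> uT; apply/eqP; rewrite -leqn0 /stab_rank first_upto_le //= uT hval_Tg. Qed.

Lemma stab_rank_gt0 u : winJ u -> u \notin Tg G -> (0 < stab_rank u)%N.
Proof.
move=> u_win uT; rewrite lt0n; apply: contraNneq u_win => rank0.
by rewrite -hval_stab_rank rank0 /= (negbTE uT).
Qed.

Lemma hval_stab_rankS u : winJ u -> u \notin Tg G ->
  hval J u = bellman G (hval (stab_rank u).-1) u.
Proof.
by move=> u_win uT; rewrite -hval_stab_rank -{1}(prednK (stab_rank_gt0 u_win uT)).
Qed.

Lemma stab_step u x : winJ u -> u \notin Tg G ->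
  ((w u x)%:E + hval (stab_rank u).-1 x <= hval J u)%E ->
  [/\ winJ x, ((w u x)%:E + hval J x <= hval J u)%E &
      ((w u x)%:E + hval J x = hval J u -> (stab_rank x < stab_rank u)%N)].
Proof.
move=> u_win uT le_u; have jJ := leq_trans (leq_pred _) (stab_rank_le u).
have le_J : ((w u x)%:E + hval J x <= hval J u)%E.
  by apply: le_trans le_u; apply: leeD2l; exact: hval_le.
split => // [|eq_u].
  by apply: contra u_win => /eqP x_infty; move: le_J; rewrite x_infty addey // leye_eq.
rewrite -(prednK (stab_rank_gt0 u_win uT)) ltnS; apply: first_upto_le.
by rewrite eq_le -(@leeD2lE _ (w u x)%:E) // eq_u le_u /= hval_le.
Qed.

Lemma opt_move_step u : winJ u -> u \in VMin G ->
  ((w u (opt_move u))%:E + hval (stab_rank u).-1 (opt_move u) <= hval J u)%E.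
Proof.
move=> u_win uMin; have uT := VMin_Tg uMin.
by rewrite (hval_stab_rankS u_win uT) /bellman (negbTE uT).
Qed.

Lemma max_step u x : winJ u -> u \in VMax G -> edge G u x ->
  ((w u x)%:E + hval (stab_rank u).-1 x <= hval J u)%E.
Proof.
move=> u_win uMax ux; rewrite (hval_stab_rankS u_win (VMax_Tg uMax)).
exact: bellman_max.
Qed.

Lemma attr_rank_le u : winJ u -> (attr_rank u <= J)%N.
Proof. by move=> u_win; rewrite /attr_rank first_upto_le. Qed.

Lemma attr_rank_gt0 u : winJ u -> u \notin Tg G -> (0 < attr_rank u)%N.
Proof.
move=> u_win uT; rewrite lt0n.
apply: contraTneq (@first_uptoP J (fun i => hval i u != +oo%E) u_win) => rank0.
by rewrite /= -/(attr_rank u) rank0 /= (negbTE uT) negbK.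
Qed.

Lemma hval_attr_rankS u : winJ u -> u \notin Tg G ->
  bellman G (hval (attr_rank u).-1) u != +oo%E.
Proof.
move=> u_win uT; have := @first_uptoP J (fun i => hval i u != +oo%E) u_win.
by rewrite -/(attr_rank u) -{1}(prednK (attr_rank_gt0 u_win uT)).
Qed.

Lemma attr_rank_lt u x : winJ u -> u \notin Tg G ->
  hval (attr_rank u).-1 x != +oo%E -> winJ x /\ (attr_rank x < attr_rank u)%N.
Proof.
move=> u_win uT x_fin; split.
  apply: contra x_fin => /eqP x_infty; rewrite -leye_eq -x_infty hval_le //.
  exact: leq_trans (leq_pred _) (attr_rank_le u_win).
by rewrite -(prednK (attr_rank_gt0 u_win uT)) ltnS first_upto_le.
Qed.

Lemma attr_move_step u : winJ u -> u \in VMin G ->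
  [/\ winJ (attr_move u), edge G u (attr_move u) & (attr_rank (attr_move u) < attr_rank u)%N].
Proof.
move=> u_win uMin; have uT := VMin_Tg uMin.
have [] // := @attr_rank_lt u (attr_move u) u_win uT; last by split; rewrite ?best_move_edge.
apply: contra (hval_attr_rankS u_win uT) => /eqP infty.
by rewrite /bellman (negbTE uT) -/(attr_move u) infty addey.
Qed.

Lemma attr_rank_max u x : winJ u -> u \in VMax G -> edge G u x ->
  winJ x /\ (attr_rank x < attr_rank u)%N.
Proof.
move=> u_win uMax ux; have uT := VMax_Tg uMax.
apply: (attr_rank_lt u_win uT); apply: contra (hval_attr_rankS u_win uT) => /eqP infty.
by rewrite -leye_eq (le_trans _ (bellman_max _ uMax ux)) // infty addey.
Qed.

End HorizonRanks.

Section AttractorMix.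
Variables (R : realType) (V : finType) (G : spg V) (J : nat) (d : R).
Hypotheses (d_gt0 : 0 < d) (dJ_le1 : d * J.+1%:R <= 1).
Local Notation w u x := ((weight G u x)%:~R : R).
Local Notation hval := (hval R G).
Local Notation winJ := (winJ R G J).
Local Notation stab_rank := (stab_rank R G J).
Local Notation opt_move := (opt_move R G J).
Local Notation attr_move := (attr_move R G J).
Implicit Types u x : V.

Definition potential u : R := fine (hval J u) + d * (stab_rank u)%:R.

Lemma potential_Tg u : u \in Tg G -> potential u = 0.
Proof. by move=> uT; rewrite /potential hval_Tg // stab_rank_Tg // mulr0 addr0. Qed.

Lemma fine_hvalJ u : winJ u -> exists2 z : int, hval J u = (z%:~R)%:E & fine (hval J u) = z%:~R.
Proof.
rewrite /winJ; case: (hval_int R G J u) => [->|[z ->]]; first by rewrite eqxx.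
by exists z.
Qed.

Lemma potential_step u x : winJ u -> u \notin Tg G ->
  ((w u x)%:E + hval (stab_rank u).-1 x <= hval J u)%E ->
  winJ x /\ w u x + potential x <= potential u - d.
Proof.
move=> u_win uT le_u; have [x_win le_J lt_rank] := stab_step u_win uT le_u; split => //.
have [zu hu fu] := fine_hvalJ u_win; have [zx hx fx] := fine_hvalJ x_win.
have rank_x : (stab_rank x)%:R <= J%:R :> R by rewrite ler_nat stab_rank_le.
rewrite /potential fu fx; have [eq_u|neq_u] := eqVneq (weight G u x + zx) zu.
  have : (stab_rank x).+1%:R <= (stab_rank u)%:R :> R.
    by rewrite ler_nat lt_rank // hx hu -EFinD -intrD eq_u.
  rewrite -natr1 -eq_u intrD => /(ler_wpM2l (ltW d_gt0)); lra.
have lt_u : weight G u x + zx + 1 <= zu.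
  by rewrite lezD1 lt_neqAle neq_u -(ler_int R) intrD -lee_fin EFinD -hx -hu.
move: lt_u; rewrite -(ler_int R) !intrD => lt_u.
have : d * (stab_rank x)%:R <= d * J%:R by rewrite ler_wpM2l // ltW.
have : 0 <= d * (stab_rank u)%:R by rewrite mulr_ge0 // ltW.
move: dJ_le1; rewrite -natr1; lra.
Qed.

Definition jump_bound : R := \sum_u \sum_x `|w u x| + 2 * \sum_u `|potential u|.
Definition attr_prob : R := d / (jump_bound + d).

Lemma jump_bound_ge0 : 0 <= jump_bound.
Proof. by rewrite addr_ge0 ?mulr_ge0 ?sumr_ge0 // => u _; rewrite sumr_ge0. Qed.

Lemma attr_prob_gt0 : 0 < attr_prob.
Proof. by rewrite divr_gt0 // ltr_wpDl // jump_bound_ge0. Qed.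

Lemma attr_prob_le1 : attr_prob <= 1.
Proof. by rewrite ler_pdivrMr ?mul1r ?lerDr ?jump_bound_ge0 // ltr_wpDl // jump_bound_ge0. Qed.

Lemma attr_prob_balance : attr_prob * (jump_bound + d) = d.
Proof. by rewrite mulfVK // gt_eqF // ltr_wpDl // jump_bound_ge0. Qed.

Lemma attr_jump u : w u (attr_move u) + potential (attr_move u) <= potential u + jump_bound.
Proof.
have w_le : w u (attr_move u) <= \sum_u \sum_x `|w u x|.
  apply: le_trans (ler_norm _) _.
  apply: le_trans (ler_sum_term (F := fun x => `|w u x|) _ _) _ => //.
  by apply: (ler_sum_term (F := fun u => \sum_x `|w u x|)) => y; rewrite sumr_ge0.
have pot_le y : `|potential y| <= \sum_u `|potential u|.
  exact: (ler_sum_term (F := fun u => `|potential u|)).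
have := ler_norm (potential (attr_move u)).
have : - potential u <= `|potential u| by rewrite -normrN ler_norm.
rewrite /jump_bound; move: (pot_le u) (pot_le (attr_move u)) w_le; lra.
Qed.

Definition attr_mix (u x : V) : R :=
  (1 - attr_prob) * (x == opt_move u)%:R + attr_prob * (x == attr_move u)%:R.

Lemma attr_mix_strat : ml_strat G (VMin G) attr_mix.
Proof.
move=> u uMin; have uT := VMin_Tg uMin; have e_gt0 := attr_prob_gt0; have e_le1 := attr_prob_le1.
split.
- by move=> x; rewrite addr_ge0 // mulr_ge0 ?subr_ge0 // ltW.
- by rewrite big_split /= -!mulr_sumr !sum_delta1 !mulr1 subrK.
- move=> x; rewrite /attr_mix.
  have [->|_] := eqVneq x (opt_move u); first by move=> _; exact: best_move_edge.
  have [->|_] := eqVneq x (attr_move u); first by move=> _; exact: best_move_edge.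
  by rewrite !mulr0 addr0 eqxx.
Qed.

Section AgainstMax.
Variable tau : V -> V -> R.
Hypothesis tau_strat : ml_strat G (VMax G) tau.
Local Notation P := (trans G attr_mix tau).

Lemma winJ_closed : chain_closed P (fun u => winJ u).
Proof.
move=> u x u_win; rewrite /trans; case: (vertexP G u) => [uT|uMin|uMax] /=.
- by rewrite pnatr_eq0 eqb0 negbK => /eqP <-.
- rewrite /attr_mix; have [->|_] := eqVneq x (opt_move u).
    by have [] := stab_step u_win (VMin_Tg uMin) (opt_move_step u_win uMin).
  have [->|_] := eqVneq x (attr_move u); first by have [] := attr_move_step u_win uMin.
  by rewrite !mulr0 addr0 eqxx.
- case: (tau_strat uMax) => _ _ /[apply] ux.
  by have [] := stab_step u_win (VMax_Tg uMax) (max_step u_win uMax ux).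
Qed.

Lemma hit_attr_rank i u : winJ u -> (attr_rank R G J u <= i)%N ->
  attr_prob ^+ i <= hit P (Tg G) i u.
Proof.
have e_gt0 := attr_prob_gt0; have e_le1 := attr_prob_le1.
have P_ge0 := trans_ge0 attr_mix_strat tau_strat.
elim: i u => [|i IHi] u u_win le_rank.
  have uT : u \in Tg G.
    by apply: contraLR le_rank => uT; rewrite -ltnNge attr_rank_gt0.
  by rewrite /hit /= uT expr0.
have [uT|uT] := boolP (u \in Tg G).
  by rewrite /hit (expect_absorb (trans_Tg _ _)) // uT exprn_ile1 // ltW.
rewrite /hit expectS -/(hit P (Tg G) i _).
case: (vertexP G u) uT => [//|uMin|uMax] _.
  have [a_win _ a_rank] := attr_move_step u_win uMin.
  apply: le_trans (ler_sum_term (F := fun x => P u x * hit P (Tg G) i x) (attr_move u) _).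
    rewrite exprS; apply: ler_pM.
    - exact: ltW.
    - exact: exprn_ge0 (ltW e_gt0).
    - by rewrite /trans uMin /attr_mix eqxx mulr1 lerDr mulr_ge0 ?ler0n ?subr_ge0.
    - by apply: IHi => //; rewrite -ltnS (leq_trans a_rank).
  by move=> x; rewrite mulr_ge0 // (hit_ge0 P_ge0 (trans_sum1 attr_mix_strat tau_strat)).
apply: le_trans (_ : \sum_x P u x * attr_prob ^+ i <= _).
  rewrite -mulr_suml (trans_sum1 attr_mix_strat tau_strat) mul1r exprS ler_piMl //.
  exact: exprn_ge0 (ltW _).
apply: ler_sum => x _; have [->|Pux] := eqVneq (P u x) 0; first by rewrite !mul0r.
have ux := trans_edge attr_mix_strat tau_strat (VMax_Tg uMax) Pux.
have [x_win x_rank] := attr_rank_max u_win uMax ux.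
by rewrite ler_wpM2l // IHi // -ltnS (leq_trans x_rank).
Qed.

Lemma winJ_hit u : winJ u -> exists n, 0 < hit P (Tg G) n u.
Proof.
move=> u_win; exists (attr_rank R G J u).
by apply: lt_le_trans (hit_attr_rank u_win (leqnn _)); rewrite exprn_gt0 // attr_prob_gt0.
Qed.

Lemma potential_super u : winJ u ->
  mean_weight G attr_mix tau u + \sum_x P u x * potential x <= potential u.
Proof.
move=> u_win; rewrite mean_weightD; case: (vertexP G u) => [uT|uMin|uMax].
- under eq_bigr do rewrite trans_Tg // eq_sym.
  by rewrite sum_delta /step_weight uT add0r.
- have uT := VMin_Tg uMin.
  under eq_bigr do rewrite /trans uMin /attr_mix mulrDl -!mulrA.
  rewrite big_split /= -!mulr_sumr !sum_delta /step_weight (negbTE uT).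
  have [_ opt_le] := potential_step u_win uT (opt_move_step u_win uMin).
  have := attr_jump u; have := attr_prob_balance; have := attr_prob_le1.
  have : 0 <= attr_prob by exact: ltW attr_prob_gt0.
  move: opt_le; set a := w u _ + _; set b := w u _ + _ => opt_le e_ge0 e_le1 bal jump.
  have : (1 - attr_prob) * a <= (1 - attr_prob) * (potential u - d) by rewrite ler_wpM2l ?subr_ge0.
  have : attr_prob * b <= attr_prob * (potential u + jump_bound) by rewrite ler_wpM2l.
  rewrite mulrA -/attr_prob; nra.
- apply: le_trans (_ : \sum_x P u x * potential u <= _); last first.
    by rewrite -mulr_suml (trans_sum1 attr_mix_strat tau_strat) mul1r.
  apply: ler_sum => x _; have [->|Pux] := eqVneq (P u x) 0; first by rewrite !mul0r.
  rewrite ler_wpM2l ?(trans_ge0 attr_mix_strat tau_strat) // /step_weight (negbTE (VMax_Tg uMax)).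
  have ux := trans_edge attr_mix_strat tau_strat (VMax_Tg uMax) Pux.
  have [_ +] := potential_step u_win (VMax_Tg uMax) (max_step u_win uMax ux).
  by move/le_trans; apply; rewrite gerBl ltW.
Qed.

Lemma ETP_attr_mix v : (ETP G attr_mix tau v <= hval J v + (d * J%:R)%:E)%E.
Proof.
have [v_win|] := boolP (winJ v); last by rewrite negbK => /eqP ->; rewrite addye ?leey.
rewrite (ETP_series attr_mix_strat tau_strat winJ_closed v_win winJ_hit).
have [z hz fz] := fine_hvalJ v_win.
apply: le_trans (_ : (potential v)%:E <= _)%E.
  rewrite lee_fin; apply: (lim_series_le_potential (trans_ge0 attr_mix_strat tau_strat)
    (trans_sum1 attr_mix_strat tau_strat) (trans_Tg _ _) winJ_closed winJ_hit) => //.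
  - by move=> u _; exact: potential_Tg.
  - by move=> u _; exact: mean_weight_Tg.
  - by move=> u; exact: potential_super.
rewrite /potential EFinD fz -hz leeD2l // lee_fin; apply: ler_wpM2l; first exact: ltW.
by rewrite ler_nat stab_rank_le.
Qed.

End AgainstMax.
End AttractorMix.

Lemma Val_m_upperE (R : realType) (V : finType) (G : spg V) v :
  Val_m_upper R G v = hval_inf R G v.
Proof.
apply/eqP; rewrite eq_le; apply/andP; split; last first.
  apply: le_ereal_inf_tmp => _ [rho rho_strat <-]; apply: le_ereal_sup_tmp.
  exists (ETP G rho (max_dirac R G) v); last exact: ETP_max_dirac.
  by exists (max_dirac R G) => //; exact: max_dirac_strat.
apply: le_ereal_inf_tmp => _ [J _ <-]; apply/lee_addgt0Pr => e e_gt0.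
pose d := Num.min e 1 / J.+1%:R.
have J_gt0 : 0 < J.+1%:R :> R by rewrite ltr0n.
have d_gt0 : 0 < d by rewrite divr_gt0 // lt_min e_gt0 ltr01.
have dJ_le1 : d * J.+1%:R <= 1 by rewrite divfK ?gt_eqF // ge_min lexx orbT.
have dJ_le : d * J%:R <= e.
  apply: le_trans (_ : d * J.+1%:R <= e); first by apply: ler_wpM2l; [exact: ltW | rewrite ler_nat].
  by rewrite divfK ?gt_eqF // ge_min lexx.
apply: ge_ereal_inf; exists (Val_m_rho G (attr_mix G J d) v).
  by exists (attr_mix G J d) => //; exact: attr_mix_strat.
apply: ge_ereal_sup => _ [tau tau_strat <-].
by apply: le_trans (ETP_attr_mix d_gt0 dJ_le1 tau_strat v) _; rewrite leeD2l // lee_fin.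
Qed.

Theorem theorem6 (R : realType) (V : finType) (G : spg V) (v : V) :
  Val_d R G v = Val_m_upper R G v.
Proof. by rewrite Val_dE Val_m_upperE. Qed.
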